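(* Let $(S,\mathcal{E})$ be a qualitative evidence frame and let $\mathfrak{F}$ be a set of evidence allocation functions on $(S,\mathcal{E})$. Define $i:2^{\mathcal{E}}\to\tau_{\mathcal{E}}$ by $i(\mathbf{E})=\bigcap\mathbf{E}$ if $\mathbf{E}\neq\emptyset$ and $i(\emptyset)=S$. Then $\mathfrak{F}\cup\{i\}$ is a set of evidence allocation functions on $(S,\mathcal{E})$.
   Context: A qualitative evidence frame is a pair $(S,\mathcal{E})$ where $S$ is a finite nonempty set (of possible states) and $\mathcal{E}$ is a nonempty family of subsets of $S$ with $\emptyset\notin\mathcal{E}$ and $S\notin\mathcal{E}$. For any family $\mathbf{E}\subseteq 2^S$, $\tau_{\mathbf{E}}$ denotes the topology on $S$ generated by $\mathbf{E}$ (as a subbasis): it consists of $\emptyset$, $S$, all finite intersections of members of $\mathbf{E}$, and all arbitrary unions of such finite intersections. For $\mathbf{E}\subseteq\mathcal{E}$, an element $D\in\tau_{\mathbf{E}}$ is called dense in $\bigcup\mathbf{E}$ w.r.t. $\tau_{\mathbf{E}}$ if $D\cap T\neq\emptyset$ for every nonempty $T\in\tau_{\mathbf{E}}$. A set of evidence allocation functions on $(S,\mathcal{E})$ is a set $\mathfrak{F}$ of functions $2^{\mathcal{E}}\to\tau_{\mathcal{E}}$ such that for all $f,g\in\mathfrak{F}$: (1) $f(\emptyset)=S$; (2) for every nonempty $\mathbf{E}\subseteq\mathcal{E}$, either $f(\mathbf{E})=\emptyset$, or $f(\mathbf{E})\in\tau_{\mathbf{E}}$ and $f(\mathbf{E})$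 is dense in $\bigcup\mathbf{E}$ w.r.t. $\tau_{\mathbf{E}}$; (3) for every $\mathbf{E}\subseteq\mathcal{E}$, $f(\mathbf{E})\subseteq g(\mathbf{E})$ or $g(\mathbf{E})\subseteq f(\mathbf{E})$. *)

From mathcomp Require Import all_boot.
Set Implicit Arguments. Unset Strict Implicit. Unset Printing Implicit Defensive.

Section Defs.
Variable S : finType.

Definition evidence_frame (E : {set {set S}}) : Prop :=
  0 < #|S| /\ E != set0 /\ set0 \notin E /\ [set: S] \notin E.

(* finite intersections of members of F (the empty intersection is S) *)
Definition fin_inter (F : {set {set S}}) (U : {set S}) : Prop :=
  exists H : {set {set S}}, H \subset F /\ U = \bigcap_(A in H) A.

(* tau_F : the topology on S generated by F as a subbasis: arbitrary unions
   (finite, since S is finite) of finite intersections of members of F;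
   contains set0 (empty union) and S (empty intersection). *)
Definition tau (F : {set {set S}}) (U : {set S}) : Prop :=
  exists B : {set {set S}}, (forall G : {set S}, G \in B -> fin_inter F G) /\
    U = \bigcup_(G in B) G.

Definition dense_in (F : {set {set S}}) (D : {set S}) : Prop :=
  tau F D /\ forall T : {set S}, tau F T -> T != set0 -> D :&: T != set0.

(* A set of evidence allocation functions on (S, E): a predicate Fam on
   functions 2^E -> tau_E (represented as total functions on {set {set S}},
   of which only the values on subsets of E matter). *)
Definition evidence_allocation_set (E : {set {set S}})
    (Fam : ({set {set S}} -> {set S}) -> Prop) : Prop :=
  forall f g, Fam f -> Fam g ->
    (forall G : {set {set S}}, G \subset E -> tau E (f G)) /\
    f set0 = [set: S] /\
    (forall G : {set {set S}}, G \subset E -> G != set0 ->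
       f G = set0 \/ (tau G (f G) /\ dense_in G (f G))) /\
    (forall G : {set {set S}}, G \subset E -> f G \subset g G \/ g G \subset f G).

Definition inter_fun (G : {set {set S}}) : {set S} :=
  if G == set0 then [set: S] else \bigcap_(A in G) A.

End Defs.

(* In the topology generated by a family G, every nonempty open set contains
   the intersection of G, which is itself open: so that intersection is either
   empty or the least nonempty open set, hence dense.  This makes the
   intersection map satisfy the allocation axioms, and comparable with every
   allocation function, whose values are likewise either empty or open. *)
From mathcomp Require Import all_boot.

Set Implicit Arguments.
Unset Strict Implicit.
Unset Printing Implicit Defensive.

Section GeneratedTopology.
Variable S : finType.
Implicit Types (F G : {set {set S}}) (U : {set S}).

Lemma tau_bigcap F G : G \subset F -> tau F (\bigcap_(A in G) A).
Proof.
move=> sGF; exists [set \bigcap_(A in G) A]; split; last by rewrite big_set1.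
by move=> X; rewrite inE => /eqP ->; exists G.
Qed.

Lemma tau_eq0_or_bigcap_sub G U : tau G U -> U = set0 \/ \bigcap_(A in G) A \subset U.
Proof.
case=> B [finB ->]; case: (set_0Vmem B) => [->|[V BV]].
  by left; rewrite big_set0.
right; apply: subset_trans (bigcup_sup V BV).
have [H [sHG ->]] := finB V BV.
by apply/bigcapsP => A HA; apply: bigcap_inf; apply: (subsetP sHG).
Qed.

Lemma dense_bigcap G : \bigcap_(A in G) A != set0 -> dense_in G (\bigcap_(A in G) A).
Proof.
move=> nzI; split=> [|T /tau_eq0_or_bigcap_sub [->|sIT] nzT].
- exact: tau_bigcap.
- by rewrite eqxx in nzT.
- by rewrite (setIidPl sIT).
Qed.

End GeneratedTopology.

Section Allocation.
Variables (S : finType) (E : {set {set S}}).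
Implicit Types (f g : {set {set S}} -> {set S}) (G : {set {set S}}).

Definition allocation_fun f : Prop :=
  [/\ forall G, G \subset E -> tau E (f G),
      f set0 = [set: S] &
      forall G, G \subset E -> G != set0 ->
        f G = set0 \/ (tau G (f G) /\ dense_in G (f G))].

Definition comparable_on f g : Prop :=
  forall G, G \subset E -> f G \subset g G \/ g G \subset f G.

Lemma evidence_allocation_setE (Fam : ({set {set S}} -> {set S}) -> Prop) :
  evidence_allocation_set E Fam <->
  (forall f, Fam f -> allocation_fun f) /\
  (forall f g, Fam f -> Fam g -> comparable_on f g).
Proof.
split=> [famE | [famF famC] f g Ff Fg].
  split=> [f Ff | f g Ff Fg].
    by have [? [? [? _]]] := famE f f Ff Ff; split.
  by have [_ [_ [_ ?]]] := famE f g Ff Fg.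
by have [? ? ?] := famF f Ff; split=> //; split=> //; split=> //; apply: famC.
Qed.

Lemma comparable_onC f g : comparable_on f g -> comparable_on g f.
Proof. by move=> cmp G /cmp [|]; [right|left]. Qed.

Lemma inter_funE G : inter_fun G = \bigcap_(A in G) A.
Proof. by rewrite /inter_fun; case: eqP => // ->; rewrite big_set0. Qed.

Lemma allocation_inter_fun : allocation_fun (@inter_fun S).
Proof.
split=> [G sGE | | G sGE _]; rewrite ?inter_funE ?big_set0 //.
- exact: tau_bigcap.
- have [->|nzI] := eqVneq (\bigcap_(A in G) A) set0; first by left.
  by right; split; [apply: tau_bigcap | apply: dense_bigcap].
Qed.

Lemma comparable_inter_fun g : allocation_fun g -> comparable_on (@inter_fun S) g.
Proof.
case=> _ g0 gdense G sGE; rewrite inter_funE.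
have [->|nzG] := eqVneq G set0; first by left; rewrite g0 big_set0.
have [->|[/tau_eq0_or_bigcap_sub [->|sIg] _]] := gdense G sGE nzG.
- by right; apply: sub0set.
- by right; apply: sub0set.
- by left.
Qed.

End Allocation.

Theorem proposition1 (S : finType) (E : {set {set S}})
    (Fam : ({set {set S}} -> {set S}) -> Prop) :
  evidence_frame E ->
  evidence_allocation_set E Fam ->
  evidence_allocation_set E (fun f => Fam f \/ f = @inter_fun S).
Proof.
move=> _ /evidence_allocation_setE [famF famC].
apply/evidence_allocation_setE; split.
  by move=> f [/famF // | ->]; apply: allocation_inter_fun.
move=> f g [Ff | ->] [Fg | ->].
- exact: famC.
- by apply: comparable_onC; apply: comparable_inter_fun; apply: famF.
- by apply: comparable_inter_fun; apply: famF.
- by move=> G _; left.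
Qed.
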